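(* Let $\mathcal A,\mathcal B$ be unital $C^*$-algebras with faithful traces $\tau,\omega$, respectively, let $J:\mathcal A\to\mathcal B$ be a Jordan *-isomorphism and $C\in\mathcal B_+^{-1}$ such that $\omega(CJ(X))=\tau(X)$ for all $X\in\mathcal A$. Then $C$ is a central element of $\mathcal B$.
   Context: $\mathcal B_+^{-1}$ is the set of positive invertible elements. A trace is a positive linear functional with $\tau(AB)=\tau(BA)$; faithful means $\tau(A)=0$, $A\ge0$ implies $A=0$. A Jordan *-isomorphism is a linear bijection $J$ with $J(XY+YX)=J(X)J(Y)+J(Y)J(X)$ and $J(X^* )=J(X)^*$. *)

From mathcomp Require Import all_boot all_order all_algebra.
From mathcomp Require Import reals.
From mathcomp Require Import complex.
Set Implicit Arguments. Unset Strict Implicit. Unset Printing Implicit Defensive.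
Import Order.TTheory GRing.Theory Num.Theory.
Local Open Scope ring_scope.

Section CStar.
Variable R : realType.

Definition is_cstar_algebra (A : algType R[i]) (star : A -> A) (nrm : A -> R) : Prop :=
  (
      (forall x y : A, star (x + y) = star x + star y) /\
      (forall (a : R[i]) (x : A), star (a *: x) = conjc a *: star x) /\
      (forall x y : A, star (x * y) = star y * star x) /\
      (forall x : A, star (star x) = x) /\
   (
      (forall x : A, 0 <= nrm x) /\
      (forall x : A, nrm x = 0 -> x = 0) /\
      (forall x y : A, nrm (x + y) <= nrm x + nrm y) /\
      (forall (a : R[i]) (x : A), ((nrm (a *: x))%:C)%C = `|a| * ((nrm x)%:C)%C) /\
      (forall x y : A, nrm (x * y) <= nrm x * nrm y) /\
      (forall x : A, nrm (star x * x) = nrm x ^+ 2) /\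
      (forall u : nat -> A,
         (forall e : R, 0 < e -> exists N : nat, forall m n : nat,
              (N <= m)%N -> (N <= n)%N -> nrm (u m - u n) < e) ->
         exists l : A, forall e : R, 0 < e -> exists N : nat, forall n : nat,
              (N <= n)%N -> nrm (u n - l) < e))).

Definition invertible (A : algType R[i]) (x : A) : Prop :=
  exists y : A, x * y = 1 /\ y * x = 1.

Definition in_spectrum (A : algType R[i]) (x : A) (l : R[i]) : Prop :=
  ~ invertible (x - l *: 1).

Definition positive (A : algType R[i]) (star : A -> A) (x : A) : Prop :=
  star x = x /\ forall l : R[i], in_spectrum x l -> 0 <= l.

Definition faithful_trace (A : algType R[i]) (star : A -> A) (tau : A -> R[i]) : Prop :=
  [/\ (forall (a : R[i]) (x y : A), tau (a *: x + y) = a * tau x + tau y),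
      (forall x : A, positive star x -> 0 <= tau x),
      (forall x y : A, tau (x * y) = tau (y * x)) &
      (forall x : A, positive star x -> tau x = 0 -> x = 0)].

Definition jordan_star_iso (A B : algType R[i]) (starA : A -> A) (starB : B -> B)
    (J : A -> B) : Prop :=
  [/\ (forall (a : R[i]) (x y : A), J (a *: x + y) = a *: J x + J y),
      bijective J,
      (forall x y : A, J (x * y + y * x) = J x * J y + J y * J x) &
      (forall x : A, J (starA x) = starB (J x))].

End CStar.

(* Write phi X = omega (C * X), so that phi (J X) = tau X.  A Jordan
   *-isomorphism preserves squares and the products x y x, and
   tau (a a b) = tau (a b a) = tau (b a a); hence
   phi (Y C Y + Y C Y) = phi (Y Y C + C Y Y) for every Y, which by the trace
   property of omega says omega ([Y, C]^2) = 0.  For self-adjoint Y the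
   element K = i [Y, C] is self-adjoint with K^2 = - [Y, C]^2, so
   omega (K^2) = 0.  Since the spectrum of a self-adjoint element is real
   (a Neumann series argument), K^2 is positive; faithfulness of omega gives
   K^2 = 0 and the C*-identity K = 0.  Splitting an arbitrary element into
   self-adjoint parts concludes. *)

From HB Require Import structures.
From mathcomp Require Import all_boot all_order all_algebra.
From mathcomp Require Import reals complex.
From mathcomp Require Import topology normedtype sequences.
From mathcomp Require Import ring lra.
Import Order.TTheory GRing.Theory Num.Theory numFieldNormedType.Exports.
Import Normc.

Set Implicit Arguments.
Unset Strict Implicit.
Unset Printing Implicit Defensive.
Local Open Scope ring_scope.

Lemma addrr_inj (F : numFieldType) (V : lmodType F) (u v : V) : u + u = v + v -> u = v.
Proof.
move=> e; apply: (@scalerI _ _ 2%:R); first by rewrite pnatr_eq0.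
by rewrite /= !scaler_nat !mulr2n.
Qed.

Lemma mulr_sum_powers (T : pzRingType) (y : T) n m : (n <= m)%N ->
  (1 - y) * \sum_(n <= k < m) y ^+ k = y ^+ n - y ^+ m.
Proof.
move=> nm; rewrite mulr_sumr (telescope_sumr_eq (fun k => - y ^+ k) _ nm).
  by rewrite opprK addrC.
by move=> k _; rewrite mulrBl mul1r exprS opprK addrC.
Qed.

Lemma sum_powers_mulr (T : pzRingType) (y : T) n m : (n <= m)%N ->
  (\sum_(n <= k < m) y ^+ k) * (1 - y) = y ^+ n - y ^+ m.
Proof.
move=> nm; rewrite mulr_suml (telescope_sumr_eq (fun k => - y ^+ k) _ nm).
  by rewrite opprK addrC.
by move=> k _; rewrite mulrBr mulr1 exprSr opprK addrC.
Qed.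

Lemma triple_prodE (T : pzRingType) (x y : T) :
  x * y * x + x * y * x =
  (x * y + y * x) * x + x * (x * y + y * x) - (x * x * y + y * (x * x)).
Proof.
rewrite mulrDl mulrDr !mulrA [x * x * y + x * y * x]addrC addrACA.
by rewrite [y * x * x + x * x * y]addrC addrK.
Qed.

Lemma exprn_lt_eventually (R : realType) (q e : R) : 0 <= q -> q < 1 -> 0 < e ->
  exists N, forall n, (N <= n)%N -> q ^+ n < e.
Proof.
move=> q0 q1 e0; have q1' : `|q| < 1 by rewrite ger0_norm.
have [N _ hN] := proj1 (cvgrPdist_lt _ _) (cvg_expr q1') e e0.
exists N => n /hN; by rewrite sub0r normrN ger0_norm // exprn_ge0.
Qed.

Lemma normcE (R : rcfType) (z : R[i]) : `|z| = (normc z)%:C%C.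
Proof. by case: z. Qed.

Section Invertible.
Variables (R : realType) (B : algType R[i]).

Lemma invertibleM (u v : B) : invertible u -> invertible v -> invertible (u * v).
Proof.
move=> [u' [uu' u'u]] [v' [vv' v'v]]; exists (v' * u'); split.
- by rewrite mulrA -(mulrA u) vv' mulr1 uu'.
- by rewrite mulrA -(mulrA v') u'u mulr1 v'v.
Qed.

Lemma invertibleZ (a : R[i]) (u : B) : a != 0 -> invertible u -> invertible (a *: u).
Proof.
move=> a0 [u' [uu' u'u]]; exists (a^-1 *: u'); split.
- by rewrite -scalerAl -scalerAr uu' scalerA mulfV // scale1r.
- by rewrite -scalerAl -scalerAr u'u scalerA mulVf // scale1r.
Qed.

Lemma mul_subZ1_addZ1 (K : B) (m : R[i]) :
  (K - m *: 1) * (K + m *: 1) = K * K - (m * m) *: 1.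
Proof.
rewrite mulrDr !mulrBl -!scalerAl -!scalerAr !mul1r !mulr1 scalerA.
by rewrite addrA subrK.
Qed.

End Invertible.

Lemma conjc_i (R : rcfType) : conjc 'i%C = - 'i%C :> R[i].
Proof. by apply/eqP; rewrite eq_complex /= oppr0 !eqxx. Qed.

Lemma i_neq0 (R : rcfType) : 'i%C != 0 :> R[i].
Proof. by rewrite eq_complex /= oner_eq0 andbF. Qed.

Lemma faithful_trace_linear (R : realType) (T : algType R[i]) (st : T -> T)
  (tr : T -> R[i]) : faithful_trace st tr -> linear tr.
Proof. by case. Qed.

Lemma jordan_star_iso_linear (R : realType) (A B : algType R[i]) (starA : A -> A)
  (starB : B -> B) (J : A -> B) : jordan_star_iso starA starB J -> linear J.
Proof. by case. Qed.

Section CStarAlgebra.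
Variables (R : realType) (B : algType R[i]) (star : B -> B) (nrm : B -> R).
Hypothesis HB : is_cstar_algebra star nrm.

Lemma starD x y : star (x + y) = star x + star y.
Proof. by case: HB => h _; apply: h. Qed.

Lemma starZ a x : star (a *: x) = conjc a *: star x.
Proof. by case: HB => _ [h _]; apply: h. Qed.

Lemma starN x : star (- x) = - star x.
Proof. by rewrite -scaleN1r starZ rmorphN1 scaleN1r. Qed.

Lemma starB x y : star (x - y) = star x - star y.
Proof. by rewrite starD starN. Qed.

Lemma starM x y : star (x * y) = star y * star x.
Proof. by case: HB => _ [_ [h _]]; apply: h. Qed.

Lemma starK : involutive star.
Proof. by case: HB => _ [_ [_ [h _]]]; apply: h. Qed.

Lemma star1 : star 1 = 1.
Proof. by rewrite -[star 1]mulr1 -{2}[1]starK -starM mulr1 starK. Qed.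

Lemma nrm_ge0 x : 0 <= nrm x.
Proof. by case: HB => _ [_ [_ [_ [h _]]]]; apply: h. Qed.

Lemma nrm_eq0 x : nrm x = 0 -> x = 0.
Proof. by case: HB => _ [_ [_ [_ [_ [h _]]]]]; apply: h. Qed.

Lemma nrmD x y : nrm (x + y) <= nrm x + nrm y.
Proof. by case: HB => _ [_ [_ [_ [_ [_ [h _]]]]]]; apply: h. Qed.

Lemma nrmZ a x : nrm (a *: x) = normc a * nrm x.
Proof.
case: HB => _ [_ [_ [_ [_ [_ [_ [nZ _]]]]]]].
by apply: complexI; rewrite nZ normcE rmorphM.
Qed.

Lemma nrmM x y : nrm (x * y) <= nrm x * nrm y.
Proof. by case: HB => _ [_ [_ [_ [_ [_ [_ [_ [h _]]]]]]]]; apply: h. Qed.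

Lemma nrm_star_mul x : nrm (star x * x) = nrm x ^+ 2.
Proof. by case: HB => _ [_ [_ [_ [_ [_ [_ [_ [_ [h _]]]]]]]]]; apply: h. Qed.

Lemma nrm_complete (u : nat -> B) :
  (forall e : R, 0 < e -> exists N : nat, forall m n : nat,
     (N <= m)%N -> (N <= n)%N -> nrm (u m - u n) < e) ->
  exists l : B, forall e : R, 0 < e -> exists N : nat, forall n : nat,
     (N <= n)%N -> nrm (u n - l) < e.
Proof. by case: HB => _ [_ [_ [_ [_ [_ [_ [_ [_ [_ h]]]]]]]]]; apply: h. Qed.

Lemma nrm0 : nrm 0 = 0.
Proof. by rewrite -(scale0r 0) nrmZ normc0 mul0r. Qed.

Lemma nrmN x : nrm (- x) = nrm x.
Proof. by rewrite -scaleN1r nrmZ normcN normc1 mul1r. Qed.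

Lemma nrm1 : nrm 1 = 1.
Proof.
have n1 : nrm 1 != 0 by apply: contra_neq (oner_neq0 B) => /nrm_eq0.
by apply: (mulfI n1); rewrite mulr1 -expr2 -nrm_star_mul star1 mulr1.
Qed.

Lemma nrmX x n : nrm (x ^+ n) <= nrm x ^+ n.
Proof.
elim: n => [|n IHn]; first by rewrite !expr0 nrm1.
rewrite !exprS; apply: le_trans (nrmM _ _) _.
by rewrite ler_wpM2l ?nrm_ge0.
Qed.

Lemma nrm_sum (I : Type) (r : seq I) (P : pred I) (F : I -> B) :
  nrm (\sum_(i <- r | P i) F i) <= \sum_(i <- r | P i) nrm (F i).
Proof.
apply: (big_ind2 (fun x y => nrm x <= y)) => // [|x1 y1 x2 y2 h1 h2].
  by rewrite nrm0.
by apply: le_trans (nrmD _ _) (lerD h1 h2).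
Qed.

Definition converges_to (u : nat -> B) (l : B) :=
  forall e : R, 0 < e -> exists N : nat, forall n, (N <= n)%N -> nrm (u n - l) < e.

Lemma converges_to_unique u l l' : converges_to u l -> converges_to u l' -> l = l'.
Proof.
move=> ul ul'; apply/subr0_eq/nrm_eq0/eqP; rewrite eq_le nrm_ge0 andbT.
apply/ler_addgt0Pr => e e0; rewrite add0r.
have e2 : 0 < e / 2 by rewrite divr_gt0.
have [N hN] := ul _ e2; have [N' hN'] := ul' _ e2.
have -> : l - l' = - (u (maxn N N') - l) + (u (maxn N N') - l').
  by rewrite opprB addrA subrK.
apply: le_trans (nrmD _ _) _; rewrite nrmN [e]splitr ltW // ltrD //.
  by rewrite hN // leq_maxl.
by rewrite hN' // leq_maxr.
Qed.

Lemma converges_to_lipschitz (f : B -> B) (c : R) u l : 0 <= c ->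
  (forall x y, nrm (f x - f y) <= c * nrm (x - y)) ->
  converges_to u l -> converges_to (f \o u) (f l).
Proof.
move=> c0 fc ul e e0; have c1 : 0 < c + 1 by rewrite ltr_wpDl.
have [N hN] := ul _ (divr_gt0 e0 c1); exists N => n Nn /=.
apply: le_lt_trans (fc _ _) _.
apply: (@le_lt_trans _ _ ((c + 1) * nrm (u n - l))).
  by rewrite ler_wpM2r ?nrm_ge0 ?lerDl.
by rewrite mulrC -ltr_pdivlMr // hN.
Qed.

Lemma nrm_mull_sub v x y : nrm (v * x - v * y) <= nrm v * nrm (x - y).
Proof. by rewrite -mulrBr nrmM. Qed.

Lemma nrm_mulr_sub v x y : nrm (x * v - y * v) <= nrm v * nrm (x - y).
Proof. by rewrite -mulrBl [X in _ <= X]mulrC nrmM. Qed.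

Lemma powers_summable y : nrm y < 1 ->
  exists l, converges_to (fun n => \sum_(0 <= k < n) y ^+ k) l.
Proof.
move=> y1; apply: nrm_complete => e e0.
have q1 : 0 < 1 - nrm y by rewrite subr_gt0.
have [N hN] := exprn_lt_eventually (nrm_ge0 y) y1 (mulr_gt0 e0 q1).
have tail m n : (N <= n)%N -> (n <= m)%N ->
    nrm (\sum_(0 <= k < m) y ^+ k - \sum_(0 <= k < n) y ^+ k) < e.
  move=> Nn nm; rewrite (big_cat_nat (leq0n n) nm) /= addrAC subrr add0r.
  apply: le_lt_trans; first exact: nrm_sum.
  apply: (@le_lt_trans _ _ (\sum_(n <= k < m) nrm y ^+ k)).
    by apply: ler_sum => k _; apply: nrmX.
  rewrite -(ltr_pM2l q1) mulr_sum_powers // mulrC.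
  by have := hN n Nn; have := exprn_ge0 m (nrm_ge0 y); lra.
exists N => m n Nm Nn; case: (leqP n m) => [nm | /ltnW mn]; first exact: tail.
by rewrite -nrmN opprB tail.
Qed.

Lemma invertible_1B y : nrm y < 1 -> invertible (1 - y).
Proof.
move=> y1; have [l sl] := powers_summable y1.
have powers_to1 : converges_to (fun n => 1 - y ^+ n) 1.
  move=> e /(exprn_lt_eventually (nrm_ge0 y) y1) [N hN]; exists N => n /hN.
  by apply: le_lt_trans; rewrite addrAC subrr add0r nrmN nrmX.
have left : converges_to (fun n => (1 - y) * \sum_(0 <= k < n) y ^+ k) 1.
  by move=> e /powers_to1 [N hN]; exists N => n /hN; rewrite mulr_sum_powers ?expr0.
have right : converges_to (fun n => (\sum_(0 <= k < n) y ^+ k) * (1 - y)) 1.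
  by move=> e /powers_to1 [N hN]; exists N => n /hN; rewrite sum_powers_mulr ?expr0.
exists l; split.
- apply: (converges_to_unique _ left).
  exact: (converges_to_lipschitz (f := fun x => (1 - y) * x))
    (nrm_ge0 _) (nrm_mull_sub _) sl.
- apply: (converges_to_unique _ right).
  exact: (converges_to_lipschitz (f := fun x => x * (1 - y)))
    (nrm_ge0 _) (nrm_mulr_sub _) sl.
Qed.

Lemma invertible_subZ1 x l : nrm x < normc l -> invertible (x - l *: 1).
Proof.
move=> xl; have l_gt0 : 0 < normc l := le_lt_trans (nrm_ge0 x) xl.
have l0 : l != 0 by apply: contraTneq l_gt0 => ->; rewrite normc0 ltxx.
have -> : x - l *: 1 = (- l) *: (1 - l^-1 *: x).
  by rewrite scalerBr scalerA mulNr mulfV // scaleN1r opprK scaleNr addrC.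
apply: invertibleZ; first by rewrite oppr_eq0.
by apply: invertible_1B; rewrite nrmZ normcV mulrC ltr_pdivrMr // mul1r.
Qed.

Lemma selfadjoint_subZ1 K (a b : R) : star K = K -> b != 0 ->
  invertible (K - (a +i* b)%C *: 1).
Proof.
move=> sK b0.
(* The shift s = t i pushes a +i* b out of the spectrum of K + s:
   nrm (K + s)^2 = nrm (K^2 + t^2) <= nrm (K^2) + t^2 < a^2 + (b + t)^2
   for this choice of t. *)
pose t := (nrm (K * K) + 1) / (2 * b); pose s := (0 +i* t)%C.
have -> : K - (a +i* b)%C *: 1 = (K + s *: 1) - ((a +i* b)%C + s) *: 1.
  by rewrite scalerDl opprD addrACA subrr addr0.
apply: invertible_subZ1.
have sJ : conjc s = - s by apply/eqP; rewrite eq_complex /= oppr0 !eqxx.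
have ss : s * s = - (t ^+ 2)%:C%C.
  by apply/eqP; rewrite eq_complex /= !mul0r !mulr0 addr0 oppr0 sub0r expr2 !eqxx.
have nx : nrm (K + s *: 1) ^+ 2 <= nrm (K * K) + t ^+ 2.
  rewrite -nrm_star_mul starD starZ star1 sK sJ scaleNr mul_subZ1_addZ1.
  rewrite ss scaleNr opprK.
  apply: le_trans (nrmD _ _) _; rewrite nrmZ nrm1 mulr1 /= expr0n /= addr0 sqrtr_sqr.
  by rewrite ger0_norm ?sqr_ge0.
have bt : 2 * b * t = nrm (K * K) + 1 by rewrite mulrC divfK // mulf_neq0 // pnatr_eq0.
rewrite -(ltr_pXn2r (n := 2)) // ?nnegrE ?nrm_ge0 //=; last exact: sqrtr_ge0.
rewrite !addr0 sqr_sqrtr ?addr_ge0 ?sqr_ge0 //.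
by have := sqr_ge0 a; have := sqr_ge0 b; have := nrm_ge0 (K * K); nra.
Qed.

Lemma positive_sqr K : star K = K -> positive star (K * K).
Proof.
move=> sK; split; first by rewrite starM sK.
move=> l; rewrite -(sqr_sqrtc l); case: (sqrtc l) => a b nl.
have [-> | b0] := eqVneq b 0; first by rewrite complexr0 -rmorphXn ler0c sqr_ge0.
case: nl; rewrite expr2 -mul_subZ1_addZ1.
have -> : K + (a +i* b)%C *: 1 = K - (- a +i* - b)%C *: 1.
  by rewrite -scaleNr; congr (_ + _ *: _); apply/eqP; rewrite eq_complex /= !opprK !eqxx.
by apply: invertibleM; apply: selfadjoint_subZ1; rewrite ?oppr_eq0.
Qed.

Lemma selfadjoint_sqr_eq0 K : star K = K -> K * K = 0 -> K = 0.
Proof.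
move=> sK KK; apply/nrm_eq0/eqP.
by rewrite -sqrf_eq0 -nrm_star_mul sK KK nrm0.
Qed.

Lemma commute_selfadjoint C :
  (forall Y, star Y = Y -> C * Y = Y * C) -> forall Y, C * Y = Y * C.
Proof.
move=> comm_sa Y.
have sa_re : star (Y + star Y) = Y + star Y by rewrite starD starK addrC.
have sa_im : star ('i%C *: (star Y - Y)) = 'i%C *: (star Y - Y).
  by rewrite starZ starB starK conjc_i scaleNr -scalerN opprB.
have -> : Y = 2^-1 *: (Y + star Y) + (2^-1 * 'i%C) *: ('i%C *: (star Y - Y)).
  rewrite scalerA -mulrA -expr2 sqr_i mulrN1 scaleNr -scalerBr opprB.
  rewrite addrACA subrr addr0 -mulr2n -(scaler_nat 2 Y) scalerA mulVf ?scale1r //.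
  by rewrite pnatr_eq0.
move: (comm_sa _ sa_re) (comm_sa _ sa_im).
set U := Y + star Y; set V := 'i%C *: (star Y - Y) => cU cV.
by rewrite mulrDr mulrDl -2!scalerAr -2!scalerAl cU cV.
Qed.

Section FaithfulTrace.
Variables (tr : B -> R[i]) (Ht : faithful_trace star tr).

HB.instance Definition _ :=
  GRing.isLinear.Build R[i] B R[i] _ tr (faithful_trace_linear Ht).

Lemma trace_commutator_sqr Y C :
  tr ((Y * C - C * Y) * (Y * C - C * Y)) =
  tr (C * (Y * C * Y + Y * C * Y)) - tr (C * (Y * Y * C + C * (Y * Y))).
Proof.
have traceC x y : tr (x * y) = tr (y * x) by case: Ht.
have r1 : tr (Y * C * Y * C) = tr (C * Y * C * Y) by rewrite traceC !mulrA.
have r2 : tr (Y * C * C * Y) = tr (C * Y * Y * C) by rewrite traceC !mulrA traceC !mulrA.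
have r3 : tr (C * C * Y * Y) = tr (C * Y * Y * C) by rewrite [RHS]traceC !mulrA.
rewrite mulrBl !mulrBr !mulrDr !linearB !linearD /= !mulrA r1 r2 r3.
by ring.
Qed.

Lemma commute_of_trace_commutator_sqr C Y : star C = C -> star Y = Y ->
  tr ((Y * C - C * Y) * (Y * C - C * Y)) = 0 -> C * Y = Y * C.
Proof.
move=> sC sY trD2; set D := Y * C - C * Y.
have sK : star ('i%C *: D) = 'i%C *: D.
  by rewrite starZ starB !starM sY sC conjc_i scaleNr -scalerN opprB.
have KK : 'i%C *: D * ('i%C *: D) = - (D * D).
  by rewrite -scalerAl -scalerAr scalerA -expr2 sqr_i scaleN1r.
have /eqP : 'i%C *: D = 0.
  have [_ _ _ faithful] := Ht.
  apply: selfadjoint_sqr_eq0 => //; apply: faithful (positive_sqr sK) _.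
  by rewrite KK linearN /= trD2 oppr0.
by rewrite scaler_eq0 (negbTE (i_neq0 R)) => /eqP/subr0_eq.
Qed.

End FaithfulTrace.

End CStarAlgebra.

Section TracialJordanMap.
Variables (R : realType) (A B : algType R[i]) (starA : A -> A) (starB : B -> B).
Variables (tau : A -> R[i]) (omega : B -> R[i]) (J : A -> B) (C : B).
Hypotheses (Htau : faithful_trace starA tau) (Homega : faithful_trace starB omega).
Hypotheses (HJ : jordan_star_iso starA starB J) (HC : forall X, omega (C * J X) = tau X).

HB.instance Definition _ :=
  GRing.isLinear.Build R[i] A B _ J (jordan_star_iso_linear HJ).
HB.instance Definition _ :=
  GRing.isLinear.Build R[i] A R[i] _ tau (faithful_trace_linear Htau).

Lemma jordan_prod x y : J (x * y + y * x) = J x * J y + J y * J x.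
Proof. by case: HJ. Qed.

Lemma jordan_sqr x : J (x * x) = J x * J x.
Proof. by apply: addrr_inj; rewrite -linearD /= jordan_prod. Qed.

Lemma jordan_triple x y : J (x * y * x) = J x * J y * J x.
Proof.
apply: addrr_inj; rewrite -linearD /= !triple_prodE linearB /=.
by rewrite !jordan_prod jordan_sqr.
Qed.

Lemma trace_jordan_triple X Z :
  omega (C * (X * Z * X + X * Z * X)) = omega (C * (X * X * Z + Z * (X * X))).
Proof.
have [g _ gJ] : bijective J by case: HJ.
rewrite -(gJ X) -(gJ Z) -!jordan_triple -jordan_sqr -jordan_prod.
rewrite -linearD /= !HC !linearD /=.
set a := g X; set b := g Z.
have traceC x y : tau (x * y) = tau (y * x) by case: Htau.
have aab : tau (a * a * b) = tau (a * b * a) by rewrite -mulrA traceC.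
by rewrite [tau (b * _)]traceC aab.
Qed.

Lemma trace_commutator_sqr_eq0 Y : omega ((Y * C - C * Y) * (Y * C - C * Y)) = 0.
Proof. by rewrite (trace_commutator_sqr Homega) trace_jordan_triple subrr. Qed.

End TracialJordanMap.

Theorem lemma18 (R : realType)
  (A : algType R[i]) (starA : A -> A) (nrmA : A -> R)
  (B : algType R[i]) (starB : B -> B) (nrmB : B -> R)
  (HA : is_cstar_algebra starA nrmA) (HB : is_cstar_algebra starB nrmB)
  (tau : A -> R[i]) (omega : B -> R[i])
  (Htau : faithful_trace starA tau) (Homega : faithful_trace starB omega)
  (J : A -> B) (HJ : jordan_star_iso starA starB J)
  (C : B) (HCpos : positive starB C) (HCinv : invertible C)
  (HC : forall X : A, omega (C * J X) = tau X) :
  forall Y : B, C * Y = Y * C.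
Proof.
have sC : starB C = C by case: HCpos.
apply: (commute_selfadjoint HB) => Y sY.
apply: (commute_of_trace_commutator_sqr HB Homega sC sY).
exact: (trace_commutator_sqr_eq0 Htau Homega HJ HC).
Qed.
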